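(* Assume that $T$ acts faithfully on $W$ and that $W$ is weakly symmetric. Let $\lambda\in Y(T)_{\mathbb R}$. Then $\Phi_\lambda$ is contained in $H_\lambda^\perp\subset Y(T)_{\mathbb R}$ and is homeomorphic to a sphere of dimension $\dim H_\lambda^\perp-1$ (i.e. to the unit sphere of $H_\lambda^\perp$; this is the empty set if $H_\lambda^\perp=0$).
   Context: $T$ is a torus over an algebraically closed field $k$ of characteristic $0$, with character group $X(T)$, cocharacter group $Y(T)$ and pairing $\langle\,,\rangle$ extended to $Y(T)_{\mathbb R}\times X(T)_{\mathbb R}\to\mathbb R$. $W$ is a $d$-dimensional $T$-representation with weights $\alpha_1,\dots,\alpha_d$. $W$ is weakly symmetric if for every line $\ell\subset X(T)_{\mathbb R}$ through $0$ the cone spanned by the $\alpha_i\in\ell$ is $\{0\}$ or $\ell$. Fix a positive definite quadratic form on $Y(T)_{\mathbb R}$ with norm $\|\cdot\|$ and let $B=\{\mu\in Y(T)_{\mathbb R}:\|\mu\|<1\}$. For $\lambda\in Y(T)_{\mathbb R}$ put $T_\lambda=\{i:\langle\lambda,\alpha_i\rangle<0\}$, $T^0_\lambda=\{i:\langle\lambda,\alpha_i\rangle=0\}$. Write $\lambda\sim\lambda'$ iff $T_\lambda=T_{\lambda'}$. Set $B_\lambda=\{\mu\in B:\mu\sim\lambda\}$, $\Phi_\lambda=\overline{B_\lambda}\setminus B_\lambda$, $H_\lambda=\operatorname{span}_{\mathbb R}\{\alpha_i:i\in T^0_\lambda\}\subset X(T)_{\mathbb R}$, and $H_\lambda^\perp=\{\mu\in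 Y(T)_{\mathbb R}:\langle\mu,h\rangle=0\ \forall h\in H_\lambda\}$. *)

From Stdlib Require Import Reals ZArith.
From mathcomp Require Import ssreflect ssrfun ssrbool eqtype ssrnat seq fintype bigop.

Set Implicit Arguments.
Unset Strict Implicit.

Local Open Scope R_scope.

(* T = G_m^n.  Y(T)_R = X(T)_R = R^n, represented as 'I_n -> R;
   X(T) = Z^n, represented as 'I_n -> Z. *)
Definition vec (n : nat) := 'I_n -> R.

Definition pairing (n : nat) (mu x : vec n) : R :=
  \big[Rplus/0]_(k < n) (mu k * x k).

Definition wR (n : nat) (a : 'I_n -> Z) : vec n := fun k => IZR (a k).

Definition lincomb (n d : nat) (alpha : 'I_d -> 'I_n -> Z) (c : 'I_d -> R) : vec n :=
  fun k => \big[Rplus/0]_(i < d) (c i * IZR (alpha i k)).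

(* Faithfulness of the action of T on W with weights alpha_i:
   the alpha_i generate the character lattice X(T) = Z^n as a group. *)
Definition faithful (n d : nat) (alpha : 'I_d -> 'I_n -> Z) : Prop :=
  forall x : 'I_n -> Z, exists c : 'I_d -> Z,
    forall k, x k = \big[Z.add/0%Z]_(i < d) (c i * alpha i k)%Z.

Definition on_line (n : nat) (v x : vec n) : Prop :=
  exists t : R, forall k, x k = t * v k.

Definition in_cone (n d : nat) (alpha : 'I_d -> 'I_n -> Z) (S : 'I_d -> Prop) (x : vec n) : Prop :=
  exists c : 'I_d -> R, (forall i, 0 <= c i) /\ (forall i, ~ S i -> c i = 0) /\
    (forall k, x k = lincomb alpha c k).

Definition in_span (n d : nat) (alpha : 'I_d -> 'I_n -> Z) (S : 'I_d -> Prop) (x : vec n) : Prop :=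
  exists c : 'I_d -> R, (forall i, ~ S i -> c i = 0) /\
    (forall k, x k = lincomb alpha c k).

Definition weakly_symmetric (n d : nat) (alpha : 'I_d -> 'I_n -> Z) : Prop :=
  forall v : vec n, (exists k, v k <> 0) ->
    let S := fun i => on_line v (wR (alpha i)) in
    (forall x, in_cone alpha S x <-> (forall k, x k = 0)) \/
    (forall x, in_cone alpha S x <-> on_line v x).

Definition qform (n : nat) (Q : 'I_n -> 'I_n -> R) (mu : vec n) : R :=
  \big[Rplus/0]_(k < n) \big[Rplus/0]_(l < n) (mu k * Q k l * mu l).

Definition pos_def_qform (n : nat) (Q : 'I_n -> 'I_n -> R) : Prop :=
  (forall k l, Q k l = Q l k) /\
  (forall mu : vec n, (exists k, mu k <> 0) -> 0 < qform Q mu).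

Definition qnorm (n : nat) (Q : 'I_n -> 'I_n -> R) (mu : vec n) : R := sqrt (qform Q mu).

Definition ball1 (n : nat) (Q : 'I_n -> 'I_n -> R) (mu : vec n) : Prop := qnorm Q mu < 1.

Definition Tneg (n d : nat) (alpha : 'I_d -> 'I_n -> Z) (lam : vec n) (i : 'I_d) : Prop :=
  pairing lam (wR (alpha i)) < 0.
Definition Tzero (n d : nat) (alpha : 'I_d -> 'I_n -> Z) (lam : vec n) (i : 'I_d) : Prop :=
  pairing lam (wR (alpha i)) = 0.

Definition equiv_lam (n d : nat) (alpha : 'I_d -> 'I_n -> Z) (lam lam' : vec n) : Prop :=
  forall i, Tneg alpha lam i <-> Tneg alpha lam' i.

Definition B_lam (n d : nat) (alpha : 'I_d -> 'I_n -> Z) (Q : 'I_n -> 'I_n -> R)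
  (lam mu : vec n) : Prop := ball1 Q mu /\ equiv_lam alpha mu lam.

(* Euclidean topology on R^n (all norms give the same topology) *)
Definition edist (n : nat) (u v : vec n) : R :=
  sqrt (\big[Rplus/0]_(k < n) ((u k - v k) * (u k - v k))).

Definition closure (n : nat) (A : vec n -> Prop) (x : vec n) : Prop :=
  forall eps, 0 < eps -> exists y, A y /\ edist x y < eps.

Definition Phi_lam (n d : nat) (alpha : 'I_d -> 'I_n -> Z) (Q : 'I_n -> 'I_n -> R)
  (lam mu : vec n) : Prop :=
  closure (B_lam alpha Q lam) mu /\ ~ B_lam alpha Q lam mu.

Definition Hperp (n d : nat) (alpha : 'I_d -> 'I_n -> Z) (lam mu : vec n) : Prop :=
  forall h, in_span alpha (Tzero alpha lam) h -> pairing mu h = 0.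

Definition unit_sphere_Hperp (n d : nat) (alpha : 'I_d -> 'I_n -> Z) (Q : 'I_n -> 'I_n -> R)
  (lam mu : vec n) : Prop := Hperp alpha lam mu /\ qnorm Q mu = 1.

Definition continuous_on (n m : nat) (A : vec n -> Prop) (f : vec n -> vec m) : Prop :=
  forall x, A x -> forall eps, 0 < eps -> exists delta, 0 < delta /\
    forall y, A y -> edist x y < delta -> edist (f x) (f y) < eps.

Definition homeomorphic (n : nat) (A B : vec n -> Prop) : Prop :=
  exists (f g : vec n -> vec n),
    (forall x, A x -> B (f x)) /\ (forall y, B y -> A (g y)) /\
    (forall x, A x -> g (f x) = x) /\ (forall y, B y -> f (g y) = y) /\
    continuous_on A f /\ continuous_on B g.

From HB Require Import structures.
From Stdlib Require Import Reals ZArith Lra Classical FunctionalExtensionality.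
From mathcomp Require Import ssreflect ssrfun ssrbool eqtype ssrnat seq fintype bigop.

(* By weak symmetry every nonzero weight has a negative multiple among the weights, so
   [mu ~ lam] holds iff [<mu, alpha_i>] vanishes for [i] in [T^0_lam] and is negative for [i]
   in [T_lam].  Hence [B_lam] is the open ball cut by a relatively open polyhedral cone of
   [H_lam^perp], its closure is the closed convex set obtained by relaxing every inequality,
   and [Phi_lam] is the relative boundary of that convex body.  Radial projection from the
   interior point [lam / (1 + |lam|^2)] maps it homeomorphically onto the unit sphere of
   [H_lam^perp]; for that point [c] the inverse is [u |-> c + rho(u) u], where [rho(u)] is the
   minimum of the explicit, continuous exit times through the sphere and through each wall
   [<mu, alpha_i> = 0], [i] in [T_lam]. *)

Set Implicit Arguments.
Unset Strict Implicit.
Local Open Scope R_scope.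

Lemma RplusA : associative Rplus. Proof. by move=> a b c; rewrite Rplus_assoc. Qed.
HB.instance Definition _ := Monoid.isComLaw.Build R 0 Rplus RplusA Rplus_comm Rplus_0_l.
HB.instance Definition _ := Monoid.isMulLaw.Build R 0 Rmult Rmult_0_l Rmult_0_r.
HB.instance Definition _ :=
  Monoid.isAddLaw.Build R Rmult Rplus Rmult_plus_distr_r Rmult_plus_distr_l.

Lemma sumR_ge0 (I : Type) (r : seq I) (P : pred I) (F : I -> R) :
  (forall i, 0 <= F i) -> 0 <= \big[Rplus/0]_(i <- r | P i) F i.
Proof.
move=> F_ge0; elim/big_rec: _ => [|i x _ x_ge0]; first lra.
by have := F_ge0 i; lra.
Qed.

Lemma sumR_le_const (I : Type) (r : seq I) (P : pred I) (F : I -> R) e :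
  0 <= e -> (forall i, F i <= e) ->
  \big[Rplus/0]_(i <- r | P i) F i <= INR (size r) * e.
Proof.
move=> e_ge0 F_le; elim: r => [|i r IHr]; first by rewrite big_nil /=; lra.
rewrite big_cons [size _]/= S_INR.
by case: (P i) => /=; have := F_le i; move: IHr; nra.
Qed.

Lemma Rmin_abs a b : Rmin a b = / 2 * (a + b - Rabs (a - b)).
Proof. rewrite /Rmin; case: Rle_dec => h; [rewrite Rabs_left1|rewrite Rabs_right]; lra. Qed.

Lemma Rmax_abs a b : Rmax a b = / 2 * (a + b + Rabs (a - b)).
Proof. rewrite /Rmax; case: Rle_dec => h; [rewrite Rabs_left1|rewrite Rabs_right]; lra. Qed.

Lemma foldr_Rmin_lb (I : eqType) (G : I -> R) b (s : seq I) :
  foldr (fun i r => Rmin (G i) r) b s <= b /\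
  forall i, i \in s -> foldr (fun i r => Rmin (G i) r) b s <= G i.
Proof.
elim: s => [|j s [le_b le_G]] /=; first by split => //; lra.
set m := foldr _ b s in le_b le_G *.
have [min_l min_r] := (Rmin_l (G j) m, Rmin_r (G j) m).
split; first lra.
move=> i; rewrite in_cons => /orP [/eqP -> //| i_s].
by have := le_G i i_s; lra.
Qed.

Lemma foldr_Rmin_mem (I : Type) (G : I -> R) b (s : seq I) :
  foldr (fun i r => Rmin (G i) r) b s = b \/
  exists i, foldr (fun i r => Rmin (G i) r) b s = G i.
Proof.
elim: s => [|j s IHs] /=; first by left.
set m := foldr _ b s in IHs *.
have [->|->] : Rmin (G j) m = G j \/ Rmin (G j) m = m by rewrite /Rmin; case: Rle_dec; auto.
  by right; exists j.
exact: IHs.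
Qed.

(** * Continuity on R^n *)

Definition cont_at (n : nat) (F : vec n -> R) (x : vec n) :=
  forall eps, 0 < eps -> exists delta, 0 < delta /\
    forall y, edist x y < delta -> Rabs (F y - F x) < eps.

Section Continuity.
Variable n : nat.
Implicit Types (F G : vec n -> R) (x y : vec n).

Lemma coord_le_edist x y k : Rabs (x k - y k) <= edist x y.
Proof.
rewrite /edist -sqrt_Rsqr_abs; apply: sqrt_le_1_alt.
rewrite (bigD1 k) //= /Rsqr -{1}[_ * _]Rplus_0_r.
by apply: Rplus_le_compat_l; apply: sumR_ge0 => i; apply: Rle_0_sqr.
Qed.

Lemma cont_at_ext F G x : (forall y, F y = G y) -> cont_at F x -> cont_at G x.
Proof.
move=> FG F_cont eps eps_gt0; have [delta [? F_near]] := F_cont eps eps_gt0.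
by exists delta; split => // y xy; rewrite -!FG; apply: F_near.
Qed.

Lemma cont_at_const (a : R) x : cont_at (fun=> a) x.
Proof. by move=> eps ?; exists 1; split=> [|y _]; rewrite ?Rminus_diag ?Rabs_R0; lra. Qed.

Lemma cont_at_coord k x : cont_at (fun y => y k) x.
Proof.
move=> eps ?; exists eps; split => // y xy.
by have := coord_le_edist x y k; rewrite -Rabs_Ropp Ropp_minus_distr; lra.
Qed.

Lemma cont_at_add F G x : cont_at F x -> cont_at G x -> cont_at (fun y => F y + G y) x.
Proof.
move=> F_cont G_cont eps eps_gt0.
have [d1 [d1_gt0 F_near]] := F_cont (eps / 2) ltac:(lra).
have [d2 [d2_gt0 G_near]] := G_cont (eps / 2) ltac:(lra).
exists (Rmin d1 d2); split => [|y xy]; first exact: Rmin_pos.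
have := F_near y ltac:(have := Rmin_l d1 d2; lra).
have := G_near y ltac:(have := Rmin_r d1 d2; lra).
have := Rabs_triang (F y - F x) (G y - G x).
by rewrite (_ : F y + G y - _ = F y - F x + (G y - G x)); [lra | ring].
Qed.

Lemma cont_at_comp F (g : R -> R) x :
  cont_at F x -> continuity_pt g (F x) -> cont_at (fun y => g (F y)) x.
Proof.
move=> F_cont g_cont eps eps_gt0.
have [a [a_gt0 g_near]] := g_cont eps eps_gt0.
have [delta [? F_near]] := F_cont a a_gt0.
exists delta; split => // y xy.
case: (Req_dec (F y) (F x)) => [->|Fxy]; first by rewrite Rminus_diag Rabs_R0.
by apply: (g_near (F y)); split; [split=> //; apply: not_eq_sym | apply: F_near].
Qed.

Let cont_pt_id z : continuity_pt id z.
Proof. exact/derivable_continuous_pt/derivable_pt_id. Qed.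

Lemma cont_at_scale F a x : cont_at F x -> cont_at (fun y => a * F y) x.
Proof.
move=> F_cont; apply: (cont_at_comp (g := fun z => a * z)) => //.
exact: (continuity_pt_scal id).
Qed.

Lemma cont_at_sub F G x : cont_at F x -> cont_at G x -> cont_at (fun y => F y - G y) x.
Proof.
move=> F_cont G_cont; apply: cont_at_add => //.
by apply: (cont_at_ext (F := fun y => -1 * G y)); [move=> y; ring | apply: cont_at_scale].
Qed.

Lemma cont_at_square F x : cont_at F x -> cont_at (fun y => F y * F y) x.
Proof.
move=> F_cont; apply: (cont_at_comp (g := fun z => z * z)) => //.
exact: (continuity_pt_mult id id).
Qed.

(* Polarization reduces products to squares, for which [cont_at_comp] applies. *)
Lemma cont_at_mul F G x : cont_at F x -> cont_at G x -> cont_at (fun y => F y * G y) x.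
Proof.
move=> F_cont G_cont.
apply: (cont_at_ext (F := fun y => / 4 * ((F y + G y) * (F y + G y) - (F y - G y) * (F y - G y)))).
  by move=> y; field.
by apply/cont_at_scale/cont_at_sub; apply: cont_at_square;
  [apply: cont_at_add | apply: cont_at_sub].
Qed.

Lemma cont_at_inv F x : cont_at F x -> F x <> 0 -> cont_at (fun y => / F y) x.
Proof.
move=> F_cont Fx_neq0; apply: (cont_at_comp (g := Rinv)) => //.
exact: (continuity_pt_inv id).
Qed.

Lemma cont_at_sqrt F x : cont_at F x -> 0 <= F x -> cont_at (fun y => sqrt (F y)) x.
Proof. by move=> F_cont ?; apply: cont_at_comp => //; apply: continuity_pt_sqrt. Qed.

Lemma cont_at_abs F x : cont_at F x -> cont_at (fun y => Rabs (F y)) x.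
Proof. by move=> F_cont; apply: cont_at_comp => //; apply: Rcontinuity_abs. Qed.

Lemma cont_at_min F G x : cont_at F x -> cont_at G x -> cont_at (fun y => Rmin (F y) (G y)) x.
Proof.
move=> F_cont G_cont; apply: (cont_at_ext (F := fun y => / 2 * (F y + G y - Rabs (F y - G y)))).
  by move=> y; rewrite Rmin_abs.
by apply/cont_at_scale/cont_at_sub; [apply: cont_at_add | apply/cont_at_abs/cont_at_sub].
Qed.

Lemma cont_at_max F G x : cont_at F x -> cont_at G x -> cont_at (fun y => Rmax (F y) (G y)) x.
Proof.
move=> F_cont G_cont; apply: (cont_at_ext (F := fun y => / 2 * (F y + G y + Rabs (F y - G y)))).
  by move=> y; rewrite Rmax_abs.
by apply/cont_at_scale/cont_at_add; [apply: cont_at_add | apply/cont_at_abs/cont_at_sub].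
Qed.

Lemma cont_at_sum (I : Type) (r : seq I) (P : pred I) (F : I -> vec n -> R) x :
  (forall i, cont_at (F i) x) -> cont_at (fun y => \big[Rplus/0]_(i <- r | P i) F i y) x.
Proof.
move=> F_cont; elim: r => [|i r IHr].
  by apply: (cont_at_ext (F := fun=> 0)) => [y|]; rewrite ?big_nil //; apply: cont_at_const.
case Pi: (P i).
  apply: (cont_at_ext (F := fun y => F i y + \big[Rplus/0]_(j <- r | P j) F j y)).
    by move=> y; rewrite big_cons Pi.
  exact: cont_at_add.
by apply: cont_at_ext IHr => y; rewrite big_cons Pi.
Qed.

Lemma exists_common_delta (T : eqType) (s : seq T) (good : T -> R -> Prop) :
  (forall k, exists delta, 0 < delta /\ good k delta) ->
  (forall k delta delta', 0 < delta' <= delta -> good k delta -> good k delta') ->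
  exists delta, 0 < delta /\ forall k, k \in s -> good k delta.
Proof.
move=> good_ex good_mono; elim: s => [|k s [delta [delta_gt0 good_s]]].
  by exists 1; split; [lra | ].
have [d [d_gt0 good_k]] := good_ex k.
have [min_l min_r] := (Rmin_l delta d, Rmin_r delta d).
exists (Rmin delta d); split => [|j]; first exact: Rmin_pos.
rewrite in_cons => /orP [/eqP ->|j_s].
  by apply: (good_mono k d) => //; split; [apply: Rmin_pos|].
by apply: (good_mono j delta) => //; [split; [apply: Rmin_pos|] | apply: good_s].
Qed.

Lemma edist_lt_of_coord x y e : 0 < e ->
  (forall k, Rabs (x k - y k) < e) -> edist x y < sqrt (INR (size (index_enum 'I_n)) + 1) * e.
Proof.
set M := INR _ => e_gt0 xy; have M_ge0 : 0 <= M by apply: pos_INR.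
have -> : sqrt (M + 1) * e = sqrt ((M + 1) * (e * e)).
  by rewrite sqrt_mult ?sqrt_square; nra.
apply: sqrt_lt_1_alt; split; first by apply: sumR_ge0 => k; apply: Rle_0_sqr.
apply: (Rle_lt_trans _ (M * (e * e))); last nra.
apply: sumR_le_const => [|k]; first nra.
have := xy k; have := Rabs_pos (x k - y k).
by have := Rsqr_abs (x k - y k); rewrite /Rsqr => ->; nra.
Qed.

Lemma continuous_on_of_coord (A : vec n -> Prop) (f : vec n -> vec n) :
  (forall x, A x -> forall k, cont_at (fun y => f y k) x) -> continuous_on A f.
Proof.
move=> f_cont x Ax eps eps_gt0.
set C := sqrt (INR (size (index_enum 'I_n)) + 1).
have C_gt0 : 0 < C by apply: sqrt_lt_R0; have := pos_INR (size (index_enum 'I_n)); lra.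
have e_gt0 : 0 < eps / C by apply: Rdiv_lt_0_compat.
have [delta [? near]] := exists_common_delta (index_enum 'I_n)
  (good := fun k delta => forall y, edist x y < delta -> Rabs (f y k - f x k) < eps / C)
  (fun k => f_cont x Ax k _ e_gt0)
  ltac:(by move=> k d d' [_ d'_le] good y xy; apply: good; lra).
exists delta; split => // y _ xy.
have := @edist_lt_of_coord (f x) (f y) (eps / C) e_gt0.
rewrite -/C (_ : C * (eps / C) = eps); last by field; lra.
apply => k; rewrite -Rabs_Ropp Ropp_minus_distr.
exact: near (mem_index_enum k) y xy.
Qed.

End Continuity.

(** * Pairing and quadratic form *)

Section LinearAlgebra.
Variable n : nat.
Implicit Types (u v x y : vec n).

Lemma pairing_ext_l u v x : (forall k, u k = v k) -> pairing u x = pairing v x.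
Proof. by move=> uv; apply: eq_bigr => k _; rewrite uv. Qed.

Lemma pairing_ext_r u x y : (forall k, x k = y k) -> pairing u x = pairing u y.
Proof. by move=> xy; apply: eq_bigr => k _; rewrite xy. Qed.

Lemma pairing_scale_l t u x : pairing (fun k => t * u k) x = t * pairing u x.
Proof. by rewrite /pairing big_distrr; apply: eq_bigr => k _ /=; ring. Qed.

Lemma pairing_scale_r t u x : pairing u (fun k => t * x k) = t * pairing u x.
Proof. by rewrite /pairing big_distrr; apply: eq_bigr => k _ /=; ring. Qed.

Lemma pairing_affine_l t u v x :
  pairing (fun k => u k + t * v k) x = pairing u x + t * pairing v x.
Proof.
by rewrite /pairing big_distrr -big_split; apply: eq_bigr => k _ /=; ring.
Qed.

Lemma pairing_segment_l t u v x :
  pairing (fun k => u k + t * (v k - u k)) x = (1 - t) * pairing u x + t * pairing v x.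
Proof.
by rewrite /pairing !big_distrr -big_split; apply: eq_bigr => k _ /=; ring.
Qed.

Lemma cont_at_pairing_l x u : cont_at (fun y => pairing y x) u.
Proof.
by apply: cont_at_sum => k; apply: cont_at_mul; [apply: cont_at_coord | apply: cont_at_const].
Qed.

Definition qpolar (Q : 'I_n -> 'I_n -> R) u v : R :=
  \big[Rplus/0]_(k < n) \big[Rplus/0]_(l < n) (u k * Q k l * v l + v k * Q k l * u l).

Variable Q : 'I_n -> 'I_n -> R.

Lemma qform_ext u v : (forall k, u k = v k) -> qform Q u = qform Q v.
Proof. by move=> uv; apply: eq_bigr => k _; apply: eq_bigr => l _; rewrite !uv. Qed.

Lemma qform_affine u v t :
  qform Q (fun k => u k + t * v k) = qform Q u + t * qpolar Q u v + t * t * qform Q v.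
Proof.
rewrite /qform /qpolar !big_distrr -!big_split; apply: eq_bigr => k _ /=.
by rewrite !big_distrr -!big_split; apply: eq_bigr => l _ /=; ring.
Qed.

Lemma qform_zero : qform Q (fun=> 0) = 0.
Proof. by rewrite /qform big1 // => k _; rewrite big1 // => l _; ring. Qed.

Lemma qform_scale t u : qform Q (fun k => t * u k) = t * t * qform Q u.
Proof.
rewrite (@qform_ext _ (fun k => 0 + t * u k)) => [|k]; last ring.
rewrite qform_affine qform_zero /qpolar big1 => [|k _]; first ring.
by rewrite big1 // => l _; ring.
Qed.

Lemma qform_segment u v t :
  qform Q (fun k => u k + t * (v k - u k)) =
  (1 - t) * qform Q u + t * qform Q v - t * (1 - t) * qform Q (fun k => v k - u k).
Proof.
have at1 := qform_affine u (fun k => v k - u k) 1.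
rewrite (@qform_ext _ v) in at1 => [|k]; last ring.
rewrite qform_affine.
have -> : qpolar Q u (fun k => v k - u k) =
  qform Q v - qform Q u - qform Q (fun k => v k - u k) by lra.
ring.
Qed.

Lemma cont_at_qform_shift v u : cont_at (fun y => qform Q (fun k => y k - v k)) u.
Proof.
apply: cont_at_sum => k; apply: cont_at_sum => l.
by do 2?apply: cont_at_mul; try apply: cont_at_const;
  apply: cont_at_sub; (apply: cont_at_coord || apply: cont_at_const).
Qed.

Lemma cont_at_qform u : cont_at (qform Q) u.
Proof.
apply: cont_at_ext (cont_at_qform_shift (fun=> 0) u) => y.
by apply: qform_ext => k; ring.
Qed.

Lemma cont_at_qpolar v u : cont_at (qpolar Q v) u.
Proof.
apply: cont_at_sum => k; apply: cont_at_sum => l.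
by apply: cont_at_add; do 2?apply: cont_at_mul;
  (apply: cont_at_coord || apply: cont_at_const).
Qed.

Hypothesis Q_posdef : pos_def_qform Q.

Lemma qform_ge0 u : 0 <= qform Q u.
Proof.
case: (classic (exists k, u k <> 0)) => [u_neq0|u_eq0]; first by apply/Rlt_le/(proj2 Q_posdef).
rewrite (@qform_ext _ (fun=> 0)) ?qform_zero => [|k]; first lra.
by apply: NNPP => uk_neq0; apply: u_eq0; exists k.
Qed.

Lemma qform_gt0_shift u v : (exists k, u k <> v k) -> 0 < qform Q (fun k => u k - v k).
Proof. by move=> [k uv]; apply: (proj2 Q_posdef); exists k; lra. Qed.

Lemma qnorm_lt1 u : qnorm Q u < 1 <-> qform Q u < 1.
Proof.
have := qform_ge0 u; rewrite /qnorm -{1}sqrt_1 => ?; split => [lt1|lt1].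
  by apply: Rnot_le_lt => /(sqrt_le_1_alt 1); lra.
by apply: sqrt_lt_1_alt; lra.
Qed.

Lemma qnorm_eq1 u : qnorm Q u = 1 <-> qform Q u = 1.
Proof.
have := qform_ge0 u; rewrite /qnorm => ?; split => [eq1|->]; last exact: sqrt_1.
by rewrite -(sqrt_sqrt (qform Q u)) // eq1; ring.
Qed.

End LinearAlgebra.

(** * Closures and homeomorphisms *)

Lemma closure_cont_le n (A : vec n -> Prop) (F : vec n -> R) a x :
  cont_at F x -> (forall y, A y -> F y <= a) -> closure A x -> F x <= a.
Proof.
move=> F_cont F_le x_cl; apply: Rnot_lt_le => Fx_gt.
have [delta [delta_gt0 F_near]] := F_cont (F x - a) ltac:(lra).
have [y [Ay xy]] := x_cl delta delta_gt0.
by have := F_near y xy; have := F_le y Ay; have := Rle_abs (F x - F y);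
  rewrite -Rabs_Ropp Ropp_minus_distr; lra.
Qed.

Lemma closure_of_segment n (A : vec n -> Prop) (x c : vec n) :
  (forall t, 0 < t <= 1 -> A (fun k => x k + t * (c k - x k))) -> closure A x.
Proof.
move=> A_seg eps eps_gt0; set E := edist x c.
have E_ge0 : 0 <= E by apply: sqrt_pos.
set t := Rmin 1 (eps / (2 * (E + 1))).
have t_gt0 : 0 < t by apply: Rmin_pos; [lra | apply: Rdiv_lt_0_compat; lra].
have t_le1 : t <= 1 := Rmin_l _ _.
have t_le : t <= eps / (2 * (E + 1)) := Rmin_r _ _.
exists (fun k => x k + t * (c k - x k)); split; first by apply: A_seg; lra.
have -> : edist x (fun k => x k + t * (c k - x k)) = t * E.
  rewrite /E /edist -[in RHS](sqrt_square t); last lra.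
  rewrite -sqrt_mult; [|nra|by apply: sumR_ge0 => k; apply: Rle_0_sqr].
  by congr sqrt; rewrite big_distrr; apply: eq_bigr => k _ /=; ring.
apply: (Rle_lt_trans _ (eps / (2 * (E + 1)) * (E + 1))); last first.
  by rewrite (_ : _ * (E + 1) = eps / 2); [lra | field; lra].
by apply: Rmult_le_compat; lra.
Qed.

Lemma homeomorphic_ext n (A A' B B' : vec n -> Prop) :
  (forall x, A x <-> A' x) -> (forall y, B y <-> B' y) ->
  homeomorphic A' B' -> homeomorphic A B.
Proof.
move=> AA' BB' [f [g [fAB [gBA [gf [fg [f_cont g_cont]]]]]]].
exists f, g; do !split.
- by move=> x /AA' /fAB /BB'.
- by move=> y /BB' /gBA /AA'.
- by move=> x /AA' /gf.
- by move=> y /BB' /fg.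
- move=> x /AA' Ax eps /(f_cont x Ax) [delta [? near]].
  by exists delta; split => // y /AA'; apply: near.
- move=> y /BB' By eps /(g_cont y By) [delta [? near]].
  by exists delta; split => // x /BB'; apply: near.
Qed.

(** * Weak symmetry *)

Section Weights.
Variables (n d : nat) (alpha : 'I_d -> 'I_n -> Z).

Local Notation wpair mu i := (pairing mu (wR (alpha i))).

Lemma lincomb_unit i k : lincomb alpha (fun j => if j == i then 1 else 0) k = IZR (alpha i k).
Proof. by rewrite /lincomb (bigD1 i) //= eqxx big1 => [|j /negbTE ->]; ring. Qed.

Lemma pairing_lincomb mu c :
  pairing mu (lincomb alpha c) = \big[Rplus/0]_(i < d) (c i * wpair mu i).
Proof.
rewrite /pairing /lincomb.
under eq_bigr => k _ do rewrite big_distrr.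
rewrite exchange_big; apply: eq_bigr => i _ /=.
by rewrite big_distrr; apply: eq_bigr => k _ /=; rewrite /wR; ring.
Qed.

Lemma cone_nonneg_multiples (S : 'I_d -> Prop) v x :
  (forall j, S j -> exists t, 0 <= t /\ forall k, wR (alpha j) k = t * v k) ->
  in_cone alpha S x -> forall k, 0 <= x k * v k.
Proof.
move=> S_mul [c [c_ge0 [c_S c_x]]] k; rewrite c_x /lincomb big_distrl.
apply: sumR_ge0 => j /=; case: (classic (S j)) => [/S_mul [t [t_ge0 alpha_j]]|Sj].
  have := alpha_j k; rewrite /wR => ->.
  by have := c_ge0 j; have := Rle_0_sqr (v k); rewrite /Rsqr => *;
     rewrite (_ : _ * _ = c j * (t * (v k * v k))); [|ring]; 
     apply: Rmult_le_pos => //; apply: Rmult_le_pos.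
by rewrite c_S //; lra.
Qed.

Hypothesis alpha_ws : weakly_symmetric alpha.

Lemma weight_zero_or_opposite i :
  (forall mu, wpair mu i = 0) \/
  exists j t, t < 0 /\ forall mu, wpair mu j = t * wpair mu i.
Proof.
case: (classic (exists k, wR (alpha i) k <> 0)) => [[k0 vk0_neq0]|alpha_i0]; last first.
  left => mu; rewrite /pairing big1 // => k _.
  by rewrite (_ : wR _ k = 0); [ring | apply: NNPP => ?; apply: alpha_i0; exists k].
right; set v := wR (alpha i) in vk0_neq0 *.
set S := fun j => on_line v (wR (alpha j)).
have alpha_i_cone : in_cone alpha S v.
  exists (fun j => if j == i then 1 else 0); split; last split.
  - by move=> j; case: (j == i); lra.
  - by move=> j; case: eqP => [-> Si|//]; exfalso; apply: Si; exists 1 => k; rewrite /v; ring.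
  - by move=> k; rewrite lincomb_unit.
move: (alpha_ws (ex_intro _ k0 vk0_neq0)) => /= -[cone0|cone_line].
  by have := proj1 (cone0 v) alpha_i_cone k0.
have /cone_line neg_v_cone : on_line v (fun k => - v k) by exists (-1) => k; ring.
apply: NNPP => no_opposite.
suff mul : forall j, S j -> exists t, 0 <= t /\ forall k, wR (alpha j) k = t * v k.
  have := cone_nonneg_multiples mul neg_v_cone k0.
  by have := Rsqr_pos_lt _ vk0_neq0; rewrite /Rsqr; lra.
move=> j [t alpha_j]; exists t; split => //; apply: Rnot_lt_le => t_lt0.
apply: no_opposite; exists j, t; split => // mu.
by rewrite (pairing_ext_r _ alpha_j) pairing_scale_r.
Qed.

Lemma pairing_pos_transfer lam mu :
  (forall i, wpair lam i < 0 -> wpair mu i < 0) -> forall i, 0 < wpair lam i -> 0 < wpair mu i.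
Proof.
move=> neg_transfer i lam_i_gt0.
case: (weight_zero_or_opposite i) => [zero|[j [t [t_lt0 opp]]]].
  by move: lam_i_gt0; rewrite zero; lra.
by have := neg_transfer j; rewrite !opp; nra.
Qed.

End Weights.

Section Cells.
Variables (n d : nat) (alpha : 'I_d -> 'I_n -> Z) (Q : 'I_n -> 'I_n -> R) (lam : vec n).
Hypotheses (alpha_ws : weakly_symmetric alpha) (Q_posdef : pos_def_qform Q).

Local Notation wpair mu i := (pairing mu (wR (alpha i))).

Definition Tzero_perp (mu : vec n) := forall i, wpair lam i = 0 -> wpair mu i = 0.

Definition open_cell (mu : vec n) :=
  qform Q mu < 1 /\ Tzero_perp mu /\ forall i, wpair lam i < 0 -> wpair mu i < 0.

Definition closed_cell (mu : vec n) :=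
  qform Q mu <= 1 /\ Tzero_perp mu /\ forall i, wpair lam i < 0 -> wpair mu i <= 0.

Lemma Hperp_iff mu : Hperp alpha lam mu <-> Tzero_perp mu.
Proof.
split => [perp i lam_i0|perp h [c [c_supp c_h]]].
  apply: perp; exists (fun j => if j == i then 1 else 0); split.
    by move=> j; case: eqP => [-> //|].
  by move=> k; rewrite lincomb_unit.
rewrite (pairing_ext_r _ c_h) pairing_lincomb big1 // => i _.
by case: (classic (Tzero alpha lam i)) => [/perp ->|/c_supp ->]; ring.
Qed.

Lemma B_lam_iff mu : B_lam alpha Q lam mu <-> open_cell mu.
Proof.
rewrite /B_lam /ball1 qnorm_lt1 // /equiv_lam /Tneg.
split => [[q_lt1 equiv]|[q_lt1 [perp neg]]].
  split => //; split => [i lam_i0|i /(proj2 (equiv i)) //].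
  have pos := pairing_pos_transfer alpha_ws (fun i => proj1 (equiv i)).
  by case: (Rtotal_order (wpair mu i) 0) => [/(proj1 (equiv i))|[//|/pos]]; lra.
split => // i; split => [mu_i_neg|]; last exact: neg.
case: (Rtotal_order (wpair lam i) 0) => [//|[/perp|/(pairing_pos_transfer alpha_ws neg)]];
  lra.
Qed.

Lemma segment_open_cell c x t : open_cell c -> closed_cell x -> 0 < t <= 1 ->
  open_cell (fun k => x k + t * (c k - x k)).
Proof.
move=> [qc_lt1 [c_perp c_neg]] [qx_le1 [x_perp x_neg]] t01.
split; [|split => i; rewrite pairing_segment_l].
- have := qform_ge0 Q_posdef (fun k => c k - x k).
  rewrite qform_segment; set q := qform Q _ => q_ge0.
  have : 0 <= t * (1 - t) * q by apply: Rmult_le_pos => //; apply: Rmult_le_pos; lra.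
  nra.
- by move=> lam_i0; rewrite c_perp // x_perp //; ring.
- by move=> lam_i_neg; have := c_neg i lam_i_neg; have := x_neg i lam_i_neg; nra.
Qed.

(* Any point of [open_cell] would do; this one is an explicit rescaling of [lam]. *)
Definition center : vec n := fun k => / (1 + qform Q lam) * lam k.

Lemma open_cell_center : open_cell center.
Proof.
have q_ge0 := qform_ge0 Q_posdef lam; rewrite /center; set s := / (1 + qform Q lam).
have s_gt0 : 0 < s by apply: Rinv_0_lt_compat; lra.
have s_q : s * (1 + qform Q lam) = 1 by rewrite /s; field; lra.
split; [|split => i; rewrite pairing_scale_l].
- rewrite qform_scale Rmult_assoc (_ : s * qform Q lam = 1 - s); last lra.
  by have := Rle_0_sqr (s - / 2); rewrite /Rsqr; lra.
- by move=> ->; ring.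
- by move=> ?; nra.
Qed.

Lemma closure_B_lam_iff mu : closure (B_lam alpha Q lam) mu <-> closed_cell mu.
Proof.
split => [mu_cl|mu_closed]; last first.
  apply: (closure_of_segment (c := center)) => t t01.
  by apply/B_lam_iff; apply: segment_open_cell open_cell_center mu_closed t01.
have cl_le (F : vec n -> R) a :
    cont_at F mu -> (forall y, open_cell y -> F y <= a) -> F mu <= a.
  by move=> F_cont F_le; apply: (closure_cont_le F_cont) mu_cl => y /B_lam_iff /F_le.
have pair_cont i := cont_at_pairing_l (wR (alpha i)) mu.
split; [|split].
- by apply: cl_le (cont_at_qform Q mu) _ => y [/Rlt_le].
- move=> i lam_i0; apply: Rle_antisym.
    by apply: cl_le (pair_cont i) _ => y [_ [/(_ i lam_i0) -> _]]; lra.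
  suff : -1 * wpair mu i <= 0 by lra.
  by apply: cl_le (cont_at_scale (-1) (pair_cont i)) _ => y [_ [/(_ i lam_i0) -> _]]; lra.
- by move=> i lam_i_neg; apply: cl_le (pair_cont i) _ => y [_ [_ /(_ i lam_i_neg)]]; lra.
Qed.

Lemma Phi_lam_iff mu : Phi_lam alpha Q lam mu <-> closed_cell mu /\ ~ open_cell mu.
Proof.
rewrite /Phi_lam closure_B_lam_iff.
by split => -[mu_closed not_open]; split => // /B_lam_iff.
Qed.

Definition perp_sphere (u : vec n) := Tzero_perp u /\ qform Q u = 1.

Lemma unit_sphere_Hperp_iff u : unit_sphere_Hperp alpha Q lam u <-> perp_sphere u.
Proof. by rewrite /unit_sphere_Hperp qnorm_eq1 // Hperp_iff. Qed.

Section RadialProjection.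
Variable c : vec n.
Hypothesis c_open : open_cell c.

Local Notation ray u t := (fun k => c k + t * u k).

Definition ball_exit (u : vec n) :=
  / 2 * (sqrt (qpolar Q c u * qpolar Q c u + 4 * (1 - qform Q c)) - qpolar Q c u).

Lemma ball_exit_gt0 u : 0 < ball_exit u /\ 0 < ball_exit u + qpolar Q c u.
Proof.
have [qc_lt1 _] := c_open; set b := qpolar Q c u.
have : Rabs b < sqrt (b * b + 4 * (1 - qform Q c)).
  rewrite -sqrt_Rsqr_abs; apply: sqrt_lt_1_alt; rewrite /Rsqr; split; [nra | lra].
by rewrite /ball_exit -/b; have := Rle_abs b; have := Rle_abs (- b); rewrite Rabs_Ropp; lra.
Qed.

(* [ball_exit u] is the positive root of [t |-> qform Q (ray u t) - 1]. *)
Lemma qform_ray_factor u t : qform Q u = 1 ->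
  qform Q (ray u t) - 1 = (t - ball_exit u) * (t + ball_exit u + qpolar Q c u).
Proof.
move=> qu1; have [qc_lt1 _] := c_open.
rewrite qform_affine qu1 /ball_exit; set b := qpolar Q c u.
set D := sqrt _; have D2 : D * D = b * b + 4 * (1 - qform Q c).
  by rewrite /D sqrt_sqrt //; nra.
have -> : qform Q c = 1 - (D * D - b * b) / 4 by lra.
field.
Qed.

Lemma qform_ray_lt u t : qform Q u = 1 -> 0 <= t < ball_exit u -> qform Q (ray u t) < 1.
Proof.
move=> qu1 t_lt; have := qform_ray_factor t qu1; have [_ ?] := ball_exit_gt0 u.
have : (t - ball_exit u) * (t + ball_exit u + qpolar Q c u) < 0 by apply: Rmult_neg_pos; lra.
lra.
Qed.

Lemma qform_ray_le u t : qform Q u = 1 -> 0 <= t <= ball_exit u -> qform Q (ray u t) <= 1.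
Proof.
move=> qu1 t_le; have := qform_ray_factor t qu1; have [_ ?] := ball_exit_gt0 u.
have : 0 <= (ball_exit u - t) * (t + ball_exit u + qpolar Q c u) by apply: Rmult_le_pos; lra.
lra.
Qed.

Lemma qform_ray_exit u : qform Q u = 1 -> qform Q (ray u (ball_exit u)) = 1.
Proof. by move=> qu1; have := qform_ray_factor (ball_exit u) qu1; rewrite Rminus_diag; lra. Qed.

(* For [lam_i < 0], [c_i < 0] and [u_i > 0], this is [Rmin (- c_i / u_i) (ball_exit u)], the
   time at which the ray leaves the half-space [mu_i <= 0], written in a form continuous in [u]. *)
Definition wall_exit i u :=
  if Rlt_dec (wpair lam i) 0 then
    - wpair c i / Rmax (wpair u i) (- wpair c i / ball_exit u)
  else ball_exit u.

Lemma wall_exit_def i u : wpair lam i < 0 ->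
  0 < - wpair c i /\ 0 < - wpair c i / ball_exit u /\
  wall_exit i u = - wpair c i / Rmax (wpair u i) (- wpair c i / ball_exit u).
Proof.
move=> lam_i_neg; have [_ [_ c_neg]] := c_open; have [rB_gt0 _] := ball_exit_gt0 u.
have ci_gt0 : 0 < - wpair c i by have := c_neg i lam_i_neg; lra.
split => //; split; first exact: Rdiv_lt_0_compat.
by rewrite /wall_exit; case: Rlt_dec.
Qed.

Lemma wall_exit_bounds i u : 0 < wall_exit i u <= ball_exit u.
Proof.
have [rB_gt0 _] := ball_exit_gt0 u.
case: (Rlt_dec (wpair lam i) 0) => [lam_i_neg|lam_i]; last first.
  by rewrite /wall_exit; case: Rlt_dec => lt /=; [contradiction | lra].
have [a_gt0 [cap_gt0 ->]] := wall_exit_def u lam_i_neg.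
set a := - wpair c i in a_gt0 cap_gt0 *; have m_le := Rmax_r (wpair u i) (a / ball_exit u).
split; first by apply: Rdiv_lt_0_compat; lra.
apply: (Rle_trans _ (a / (a / ball_exit u))); last by right; field; lra.
by apply: Rmult_le_compat_l; [lra | apply: Rinv_le_contravar].
Qed.

Lemma pairing_ray_wall i u t : wpair lam i < 0 -> 0 <= t ->
  (t <= wall_exit i u -> wpair (ray u t) i <= 0) /\
  (t < wall_exit i u -> wpair (ray u t) i < 0).
Proof.
move=> /(wall_exit_def u) [a_gt0 [cap_gt0 ->]] t_ge0; rewrite pairing_affine_l.
set a := - wpair c i in a_gt0 cap_gt0 *; set m := Rmax _ _.
have [p_le q_le] := (Rmax_l (wpair u i) (a / ball_exit u), Rmax_r (wpair u i) (a / ball_exit u)).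
have m_gt0 : 0 < m by rewrite /m; lra.
have tp_le : t * wpair u i <= t * m by apply: Rmult_le_compat_l.
have am : a / m * m = a by field; lra.
have -> : wpair c i = - a by rewrite /a; ring.
split => t_le.
  suff : t * m <= a / m * m by lra.
  by apply: Rmult_le_compat_r; lra.
suff : t * m < a / m * m by lra.
exact: Rmult_lt_compat_r.
Qed.

Lemma wall_exit_hit i u : wpair lam i < 0 ->
  wall_exit i u = ball_exit u \/ wpair (ray u (wall_exit i u)) i = 0.
Proof.
move=> /(wall_exit_def u) [a_gt0 [cap_gt0 ->]]; rewrite pairing_affine_l.
set a := - wpair c i in a_gt0 cap_gt0 *; have -> : wpair c i = - a by rewrite /a; ring.
have [rB_gt0 _] := ball_exit_gt0 u.
by rewrite /Rmax; case: Rle_dec => p_le; [left | right]; field; lra.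
Qed.

Definition exit_radius u := foldr (fun i r => Rmin (wall_exit i u) r) (ball_exit u) (index_enum 'I_d).

Lemma exit_radius_attained u :
  exit_radius u = ball_exit u \/ exists i, exit_radius u = wall_exit i u.
Proof. exact: foldr_Rmin_mem. Qed.

Lemma exit_radius_bounds u :
  0 < exit_radius u /\ exit_radius u <= ball_exit u /\ forall i, exit_radius u <= wall_exit i u.
Proof.
have [le_rB le_wall] := foldr_Rmin_lb (wall_exit^~ u) (ball_exit u) (index_enum 'I_d).
split; last by split => // i; apply/le_wall/mem_index_enum.
case: (exit_radius_attained u) => [|[i]] ->.
  exact: (proj1 (ball_exit_gt0 u)).
exact: (proj1 (wall_exit_bounds i u)).
Qed.

Lemma Tzero_perp_ray u t : Tzero_perp u -> Tzero_perp (ray u t).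
Proof.
have [_ [c_perp _]] := c_open.
by move=> u_perp i lam_i0; rewrite pairing_affine_l c_perp // u_perp //; ring.
Qed.

Lemma ray_open_cell u t : perp_sphere u -> 0 <= t < exit_radius u -> open_cell (ray u t).
Proof.
move=> [u_perp qu1] t_lt; have [_ [le_rB le_wall]] := exit_radius_bounds u.
split; first by apply: qform_ray_lt; lra.
split; first exact: Tzero_perp_ray.
by move=> i lam_i_neg; apply: (proj2 (pairing_ray_wall u lam_i_neg _)); have := le_wall i; lra.
Qed.

Lemma ray_exit_closed_cell u : perp_sphere u -> closed_cell (ray u (exit_radius u)).
Proof.
move=> [u_perp qu1]; have [r_gt0 [le_rB le_wall]] := exit_radius_bounds u.
split; first by apply: qform_ray_le; lra.
split; first exact: Tzero_perp_ray.
by move=> i lam_i_neg; apply: (proj1 (pairing_ray_wall u lam_i_neg _)); have := le_wall i; lra.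
Qed.

Lemma ray_exit_not_open_cell u : perp_sphere u -> ~ open_cell (ray u (exit_radius u)).
Proof.
move=> [_ qu1] [q_lt1 [_ neg]].
have exit_ball : exit_radius u <> ball_exit u.
  by move=> exit_rB; move: q_lt1; rewrite exit_rB qform_ray_exit //; lra.
case: (exit_radius_attained u) => [//|[i exit_i]].
case: (Rlt_dec (wpair lam i) 0) => [lam_i_neg|lam_i].
  case: (wall_exit_hit u lam_i_neg) => [hit|hit]; first by apply: exit_ball; rewrite exit_i.
  by have := neg i lam_i_neg; rewrite exit_i hit; lra.
by apply: exit_ball; rewrite exit_i /wall_exit; case: Rlt_dec.
Qed.

Definition radial_lift u : vec n := ray u (exit_radius u).

Definition radial_proj (x : vec n) : vec n :=
  fun k => (x k - c k) / sqrt (qform Q (fun j => x j - c j)).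

Lemma not_open_cell_gt0 x : ~ open_cell x -> 0 < qform Q (fun k => x k - c k).
Proof.
move=> x_not_open; apply: qform_gt0_shift => //; apply: NNPP => x_eq_c.
apply: x_not_open; suff -> : x = c by [].
by apply: functional_extensionality => k; apply: NNPP => xk; apply: x_eq_c; exists k.
Qed.

Lemma radial_proj_sphere x : closed_cell x -> ~ open_cell x -> perp_sphere (radial_proj x).
Proof.
move=> [_ [x_perp _]] /not_open_cell_gt0 q_gt0; have [_ [c_perp _]] := c_open.
set r := sqrt (qform Q (fun k => x k - c k)); have r_gt0 : 0 < r by apply: sqrt_lt_R0.
have proj_x : forall k, radial_proj x k = / r * (x k + -1 * c k).
  by move=> k; rewrite /radial_proj -/r; field; lra.
split => [i lam_i0|].
  by rewrite (pairing_ext_l _ proj_x) pairing_scale_l pairing_affine_l c_perp // x_perp //; ring.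
rewrite (qform_ext _ proj_x) qform_scale (@qform_ext _ _ _ (fun k => x k - c k)) => [|k]; last ring.
have rr : r * r = qform Q (fun k => x k - c k) by rewrite /r sqrt_sqrt; lra.
by rewrite -rr; field; lra.
Qed.

Lemma radial_lift_proj x : closed_cell x -> ~ open_cell x -> radial_lift (radial_proj x) = x.
Proof.
move=> x_closed x_not_open; have u_sph := radial_proj_sphere x_closed x_not_open.
set u := radial_proj x in u_sph *.
have q_gt0 := not_open_cell_gt0 x_not_open.
set r := sqrt (qform Q (fun k => x k - c k)).
have r_gt0 : 0 < r by apply: sqrt_lt_R0.
have x_ray : x = ray u r.
  by apply: functional_extensionality => k; rewrite /u /radial_proj -/r; field; lra.
have [rho_gt0 _] := exit_radius_bounds u.
suff rho_r : exit_radius u = r by rewrite /radial_lift rho_r.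
case: (Rtotal_order r (exit_radius u)) => [r_lt|[//|r_gt]]; exfalso.
  by apply: x_not_open; rewrite x_ray; apply: ray_open_cell => //; lra.
apply: (ray_exit_not_open_cell u_sph).
have -> : ray u (exit_radius u) =
    (fun k => x k + (1 - exit_radius u / r) * (c k - x k)).
  by apply: functional_extensionality => k; rewrite x_ray; field; lra.
have ratio_lt1 : exit_radius u / r < 1.
  by apply: (Rmult_lt_reg_r r) => //; rewrite /Rdiv Rmult_assoc Rinv_l; lra.
have := Rdiv_lt_0_compat _ _ rho_gt0 r_gt0.
by move=> ?; apply: segment_open_cell => //; lra.
Qed.

Lemma radial_proj_lift u : perp_sphere u -> radial_proj (radial_lift u) = u.
Proof.
move=> [_ qu1]; have [rho_gt0 _] := exit_radius_bounds u; rewrite /radial_proj.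
have -> : qform Q (fun k => radial_lift u k - c k) = exit_radius u * exit_radius u.
  rewrite (@qform_ext _ _ _ (fun k => exit_radius u * u k)) => [|k]; last by rewrite /radial_lift; ring.
  by rewrite qform_scale qu1; ring.
apply: functional_extensionality => k.
by rewrite sqrt_square /radial_lift; [field | ]; lra.
Qed.

Lemma cont_at_ball_exit u : cont_at ball_exit u.
Proof.
have [qc_lt1 _] := c_open.
apply/cont_at_scale/cont_at_sub; last exact: cont_at_qpolar.
apply: cont_at_sqrt; first by apply/cont_at_add/cont_at_const/cont_at_mul; apply: cont_at_qpolar.
by have := Rle_0_sqr (qpolar Q c u); rewrite /Rsqr; lra.
Qed.

Lemma cont_at_wall_exit i u : cont_at (wall_exit i) u.
Proof.
case: (Rlt_dec (wpair lam i) 0) => [lam_i_neg|lam_i]; last first.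
  by apply: cont_at_ext (cont_at_ball_exit u) => v; rewrite /wall_exit; case: Rlt_dec.
have [a_gt0 [cap_gt0 _]] := wall_exit_def u lam_i_neg.
apply: (cont_at_ext (F := fun v => - wpair c i / Rmax (wpair v i) (- wpair c i / ball_exit v))).
  by move=> v; rewrite /wall_exit; case: Rlt_dec.
apply: cont_at_mul; first exact: cont_at_const.
apply: cont_at_inv; last by have := Rmax_r (wpair u i) (- wpair c i / ball_exit u); lra.
apply: cont_at_max; first exact: cont_at_pairing_l.
apply: cont_at_mul; first exact: cont_at_const.
by apply: cont_at_inv; [apply: cont_at_ball_exit | have := ball_exit_gt0 u; lra].
Qed.

Lemma cont_at_exit_radius u : cont_at exit_radius u.
Proof.
rewrite /exit_radius; elim: (index_enum 'I_d) => [|j s IHs] /=; first exact: cont_at_ball_exit.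
exact: cont_at_min (cont_at_wall_exit j u) IHs.
Qed.

Lemma boundary_homeomorphic_sphere :
  homeomorphic (fun x => closed_cell x /\ ~ open_cell x) perp_sphere.
Proof.
exists radial_proj, radial_lift.
split; last split; last split; last split; last split.
- by move=> x [x_closed x_not_open]; apply: radial_proj_sphere.
- by move=> u u_sph; split; [apply: ray_exit_closed_cell | apply: ray_exit_not_open_cell].
- by move=> x [x_closed x_not_open]; apply: radial_lift_proj.
- exact: radial_proj_lift.
- apply: continuous_on_of_coord => x [_ /not_open_cell_gt0 q_gt0] k.
  apply: cont_at_mul; first exact: cont_at_sub (cont_at_coord k x) (cont_at_const _ x).
  apply: cont_at_inv; last by have := sqrt_lt_R0 _ q_gt0; lra.
  exact: cont_at_sqrt (cont_at_qform_shift Q c x) (Rlt_le _ _ q_gt0).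
- apply: continuous_on_of_coord => u _ k.
  exact: cont_at_add (cont_at_const _ u) (cont_at_mul (cont_at_exit_radius u) (cont_at_coord k u)).
Qed.

End RadialProjection.

End Cells.

Theorem mainTheorem3 (n d : nat) (alpha : 'I_d -> 'I_n -> Z) (Q : 'I_n -> 'I_n -> R)
  (hfaith : faithful alpha) (hws : weakly_symmetric alpha) (hQ : pos_def_qform Q)
  (lam : vec n) :
  (forall mu, Phi_lam alpha Q lam mu -> Hperp alpha lam mu) /\
  homeomorphic (Phi_lam alpha Q lam) (unit_sphere_Hperp alpha Q lam).
Proof.
have Phi_iff := Phi_lam_iff lam hws hQ.
split; first by move=> mu /Phi_iff [[_ [mu_perp _]] _]; apply/Hperp_iff.
apply: (homeomorphic_ext Phi_iff (unit_sphere_Hperp_iff alpha lam hQ)).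
exact: (@boundary_homeomorphic_sphere n d alpha Q lam hQ _ (open_cell_center alpha lam hQ)).
Qed.
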